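(* Let $\mathcal{K}=(\mathcal{D},\mathsf{O})$ be a $\mathcal{DBL}$ knowledge base over $V$ with $\mathcal{D}=(\mathcal{B}_1,\mathcal{B}_\rightarrow)$, let $c\in\mathfrak{C}$, and let $\phi$ be a context formula for $c$ with respect to $\mathsf{O}$. If $\delta_{\mathcal{B}_\rightarrow}(\phi)>0$, then $P_{\mathcal{K}}(c[\infty])=1$ (independently of $\mathcal{B}_1$).
   Context: An ontology language $\mathcal{L}$ consists of sets $\mathfrak{A}$ (axioms) and $\mathfrak{C}$ (consequences), a class $\mathfrak{O}$ of finite subsets of $\mathfrak{A}$ (ontologies) closed under subsets, a class $\mathfrak{I}$ of interpretations, and a relation $\models\subseteq\mathfrak{I}\times(\mathfrak{A}\cup\mathfrak{C})$; $\mathcal{O}\models c$ means every interpretation satisfying all axioms of $\mathcal{O}$ satisfies $c$. Let $V$ be a finite set of Boolean variables. A $V$-ontology is a finite set $\mathsf{O}$ of pairs $\langle\alpha:\kappa\rangle$ with $\alpha\in\mathfrak{A}$ and $\kappa$ a consistent set of literals over $V$, such that $\{\alpha\mid\langle\alpha:\kappa\rangle\in\mathsf{O}\}\in\mathfrak{O}$. For a valuation (world) $\mathcal{W}$ of $V$, $\mathsf{O}_{\mathcal{W}}:=\{\alpha\mid\langle\alpha:\kappa\rangle\in\mathsf{O},\ \mathcal{W}\models_p\kappa\}$. A context formula for $c$ w.r.t. $\mathsf{O}$ is a propositional formula $\phi$ over $V$ such that for every valuation $\mathcal{W}$ of $V$: $\mathsf{O}_{\mathcal{W}}\models c$ iff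 $\mathcal{W}\models_p\phi$. A two-slice BN (TBN) over $V$ is a pair $(G,\Phi)$ with $G$ a DAG on $V\cup V'$, $V'=\{x'\mid x\in V\}$, with no edges into elements of $V$, and $\Phi$ giving for each $x'\in V'$ a conditional distribution $P(x'\mid\pi(x'))$ given its parents. A DBN over $V$ is a pair $\mathcal{D}=(\mathcal{B}_1,\mathcal{B}_\rightarrow)$ with $\mathcal{B}_1$ a BN over $V$ and $\mathcal{B}_\rightarrow$ a TBN over $V$. The unraveling $\mathcal{B}_{1:t}$ is the BN over $V_1\cup\dots\cup V_t$ (copies $x_i$ of each $x\in V$) in which the nodes of $V_1$ have the structure and tables of $\mathcal{B}_1$, and for $2\le i\le t$ each $x_i$ has as parents the images of $\pi(x')$ in $\mathcal{B}_\rightarrow$ under $y\mapsto y_{i-1}$, $y'\mapsto y_i$, with the conditional table of $x'$. For a valuation $\mathcal{W}$ of $V_1\cup\dots\cup V_t$, $\mathcal{W}(i)$ denotes its restriction to $V_i$, viewed as a valuation of $V$. A $\mathcal{DBL}$ KB is a pair $\mathcal{K}=(\mathcal{D},\mathsf{O})$ with $\mathcal{D}$ a DBN over $V$ and $\mathsf{O}$ a $V$-ontology. The probability of observing $c$ within $t$ steps is $P_{\mathcal{K}}(c[1:t]):=\sum_{\mathcal{W}\,:\,\exists i\in\{1,\dots,t\}.\ \mathsf{O}_{\mathcal{W}(i)}\models c}P_{\mathcal{B}_{1:t}}(\mathcal{W})$, the sum over valuations $\mathcal{W}$ of $V_1\cup\dots\cup V_t$; this is nondecreasing in $t$ and bounded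 by 1, and the probability of eventually observing $c$ is $P_{\mathcal{K}}(c[\infty]):=\lim_{t\to\infty}P_{\mathcal{K}}(c[1:t])$. A TBN $\mathcal{B}$ over $V$ defines a time-homogeneous Markov chain on the finite set of valuations of $V$ with transition probabilities $P(\mathcal{W}'\mid\mathcal{W}):=\prod_{x'\in V'}P(x'\mid\pi(x'))$ evaluated with $V$ set according to $\mathcal{W}$ and $V'$ according to $\mathcal{W}'$. A distribution $P_W$ on valuations of $V$ is stationary if $\sum_{\mathcal{W}}P(\mathcal{V}\mid\mathcal{W})P_W(\mathcal{W})=P_W(\mathcal{V})$ for every valuation $\mathcal{V}$. Let $\Delta_{\mathcal{B}}$ be the set of stationary distributions, and for a propositional formula $\phi$ over $V$ let $\delta_{\mathcal{B}}(\phi):=\min_{P\in\Delta_{\mathcal{B}}}\sum_{\mathcal{W}\models_p\phi}P(\mathcal{W})$. *)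

From Stdlib Require Import Reals List ClassicalDescription.
From mathcomp Require Import all_boot.

Set Implicit Arguments.
Unset Strict Implicit.
Unset Printing Implicit Defensive.

Local Open Scope R_scope.

Record OntologyLanguage := {
  ol_ax : Type;
  ol_cons : Type;
  ol_is_ont : list ol_ax -> Prop;
  ol_is_ont_closed : forall O O', List.incl O' O -> ol_is_ont O -> ol_is_ont O';
  ol_interp : Type;
  ol_models_ax : ol_interp -> ol_ax -> Prop;
  ol_models_cons : ol_interp -> ol_cons -> Prop
}.

Definition entails (L : OntologyLanguage) (O : list (ol_ax L)) (c : ol_cons L) : Prop :=
  forall I : ol_interp L,
    (forall a, List.In a O -> ol_models_ax I a) -> ol_models_cons I c.

Definition world (V : finType) := {ffun V -> bool}.

Inductive pform (V : Type) : Type :=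
| PVar : V -> pform V
| PTrue : pform V
| PFalse : pform V
| PNot : pform V -> pform V
| PAnd : pform V -> pform V -> pform V
| POr : pform V -> pform V -> pform V.

Fixpoint psat (V : finType) (W : world V) (phi : pform V) : bool :=
  match phi with
  | PVar x => W x
  | PTrue => true
  | PFalse => false
  | PNot p => ~~ psat W p
  | PAnd p q => psat W p && psat W q
  | POr p q => psat W p || psat W q
  end.

(* literals: (x, true) = x, (x, false) = ¬x *)
Definition literal (V : Type) := (V * bool)%type.

Definition consistent (V : Type) (k : list (literal V)) : Prop :=
  ~ (exists x, List.In (x, true) k /\ List.In (x, false) k).

Definition sat_lits (V : finType) (W : world V) (k : list (literal V)) : bool :=
  all (fun l => W l.1 == l.2) k.

Definition vontology (L : OntologyLanguage) (V : Type) :=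
  list (ol_ax L * list (literal V)).

Definition is_vontology (L : OntologyLanguage) (V : Type) (O : vontology L V) : Prop :=
  (forall p, List.In p O -> consistent p.2) /\ ol_is_ont (map fst O).

Definition restrict (L : OntologyLanguage) (V : finType) (O : vontology L V)
  (W : world V) : list (ol_ax L) :=
  map fst (filter (fun p => sat_lits W p.2) O).

Definition context_formula (L : OntologyLanguage) (V : finType) (O : vontology L V)
  (c : ol_cons L) (phi : pform V) : Prop :=
  forall W : world V, entails (restrict O W) c <-> psat W phi = true.

(* bn_par y x : y is a parent of x; bn_cpt x W = P(x = true | π(x)),
   evaluated at the values W gives to the parents (locality). *)
Record BN (V : finType) := {
  bn_par : V -> V -> bool;
  bn_dag : exists rank : V -> nat, forall x y, bn_par y x -> (rank y < rank x)%N;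
  bn_cpt : V -> world V -> R;
  bn_cpt_local : forall x (W W' : world V), (forall y, bn_par y x -> W y = W' y) ->
                   bn_cpt x W = bn_cpt x W';
  bn_cpt_range : forall x W, 0 <= bn_cpt x W <= 1
}.

Definition bn_joint (V : finType) (B : BN V) (W : world V) : R :=
  \big[Rmult/1]_(x : V) (if W x then bn_cpt B x W else 1 - bn_cpt B x W).

(* Two-slice BN: graph on V ∪ V', no edges into V.
   tbn_parV y x : y (in V) is a parent of x';
   tbn_parV' y x : y' (in V') is a parent of x';
   tbn_cpt x W W' = P(x' = true | π(x')) with V set by W and V' set by W'. *)
Record TBN (V : finType) := {
  tbn_parV : V -> V -> bool;
  tbn_parV' : V -> V -> bool;
  tbn_dag : exists rank : V -> nat, forall x y, tbn_parV' y x -> (rank y < rank x)%N;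
  tbn_cpt : V -> world V -> world V -> R;
  tbn_cpt_local : forall x (W1 W1' W2 W2' : world V),
      (forall y, tbn_parV y x -> W1 y = W2 y) ->
      (forall y, tbn_parV' y x -> W1' y = W2' y) ->
      tbn_cpt x W1 W1' = tbn_cpt x W2 W2';
  tbn_cpt_range : forall x W W', 0 <= tbn_cpt x W W' <= 1
}.

Definition trans (V : finType) (T : TBN V) (W W' : world V) : R :=
  \big[Rmult/1]_(x : V) (if W' x then tbn_cpt T x W W' else 1 - tbn_cpt T x W W').

Definition DBN (V : finType) := (BN V * TBN V)%type.

(* Joint distribution of the unraveling B_{1:t}, on a trajectory
   [W(1); ...; W(t)]: product of all conditional tables, i.e.
   P_{B1}(W(1)) * Π_{i=2}^t P(W(i) | W(i-1)). *)
Fixpoint chain_prob (V : finType) (T : TBN V) (w : world V) (ws : seq (world V)) : R :=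
  match ws with
  | [::] => 1
  | w' :: ws' => trans T w w' * chain_prob T w' ws'
  end.

Definition unravel_joint (V : finType) (D : DBN V) (ws : seq (world V)) : R :=
  match ws with
  | [::] => 1
  | w :: ws' => bn_joint D.1 w * chain_prob D.2 w ws'
  end.

Definition DBL_KB (L : OntologyLanguage) (V : finType) :=
  (DBN V * vontology L V)%type.

Definition ind (P : Prop) : R := if excluded_middle_informative P then 1 else 0.

Definition prob_within (L : OntologyLanguage) (V : finType) (K : DBL_KB L V)
  (c : ol_cons L) (t : nat) : R :=
  \big[Rplus/0]_(W : t.-tuple (world V))
     (ind (exists i : 'I_t, entails (restrict K.2 (tnth W i)) c)
        * unravel_joint K.1 W).

(* P_K(c[∞]) = 1 : the limit of P_K(c[1:t]) as t → ∞ is 1 *)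
Definition prob_eventually_is (L : OntologyLanguage) (V : finType) (K : DBL_KB L V)
  (c : ol_cons L) (p : R) : Prop :=
  Un_cv (fun t => prob_within K c t) p.

Definition stationary (V : finType) (T : TBN V) (P : world V -> R) : Prop :=
  (forall W, 0 <= P W) /\
  \big[Rplus/0]_(W : world V) P W = 1 /\
  (forall U : world V, \big[Rplus/0]_(W : world V) (trans T W U * P W) = P U).

Definition mass (V : finType) (P : world V -> R) (phi : pform V) : R :=
  \big[Rplus/0]_(W : world V | psat W phi) P W.

Definition is_delta (V : finType) (T : TBN V) (phi : pform V) (d : R) : Prop :=
  (exists P, stationary T P /\ mass P phi = d) /\
  (forall P, stationary T P -> d <= mass P phi).

(* Let g_n(w) be the probability that the transition chain, started in w, avoids
   phi during n further steps.  Then P(c[1:n+1]) = 1 - sum_w [w |/= phi] P_B1(w) g_n(w),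
   and g_n decreases to a limit h with h(w) = sum_w' P(w'|w) [w' |/= phi] h(w').
   If m = max h were positive, a maximum principle would make the states where
   h = m and phi fails a closed class of the chain; a stationary distribution
   supported there gives phi mass 0, contradicting delta(phi) > 0.  So h = 0 and
   the probability of observing c tends to 1, whatever B1 is. *)

Set Warnings "-notation-overridden,-ambiguous-paths".
From Pilot Require Import Defs.
From Stdlib Require Import Reals Lra Classical ClassicalDescription.
From mathcomp Require Import all_boot order ssralg ssrnum matrix Rstruct.
Set Implicit Arguments.
Unset Strict Implicit.
Unset Printing Implicit Defensive.
Local Open Scope R_scope.

Lemma sumR_ge0 (I : finType) (F : I -> R) :
  (forall i, 0 <= F i) -> 0 <= \big[Rplus/0]_i F i.
Proof. by move=> F_ge0; apply/RleP/Num.Theory.sumr_ge0 => i _; apply/RleP. Qed.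

Lemma sumR_le (I : finType) (F G : I -> R) :
  (forall i, F i <= G i) -> \big[Rplus/0]_i F i <= \big[Rplus/0]_i G i.
Proof. by move=> FG; apply/RleP/Num.Theory.ler_sum => i _; apply/RleP. Qed.

Lemma sumRB (I : finType) (F G : I -> R) :
  \big[Rplus/0]_i (F i - G i) = \big[Rplus/0]_i F i - \big[Rplus/0]_i G i.
Proof. by rewrite big_split /= /Rminus (big_morph _ Ropp_plus_distr Ropp_0). Qed.

Lemma sumR_eq0P (I : finType) (F : I -> R) :
  (forall i, 0 <= F i) -> \big[Rplus/0]_i F i = 0 -> forall i, F i = 0.
Proof.
move=> F_ge0 F0 i; apply: (@Num.Theory.psumr_eq0P R I xpredT) => // j _.
exact/RleP.
Qed.

Lemma big_tuple0 (T : Type) (idx : T) (op : Monoid.com_law idx) (A : finType)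
    (F : 0.-tuple A -> T) :
  \big[op/idx]_(ws : 0.-tuple A) F ws = F [tuple].
Proof. by apply: big_pred1 => ws; apply/esym/eqP; exact: tuple0. Qed.

Lemma big_tupleS (T : Type) (idx : T) (op : Monoid.com_law idx) (A : finType) n
    (F : n.+1.-tuple A -> T) :
  \big[op/idx]_(ws : n.+1.-tuple A) F ws =
  \big[op/idx]_(v : A) \big[op/idx]_(ws : n.-tuple A) F [tuple of v :: ws].
Proof.
rewrite pair_big (reindex (fun p : A * n.-tuple A => [tuple of p.1 :: p.2])) //=.
exists (fun t => (thead t, [tuple of behead t])).
- by move=> [v ws] _; congr pair; apply: val_inj.
- by move=> t _; rewrite [RHS]tuple_eta.
Qed.

Lemma Un_cv_const (x : R) : Un_cv (fun=> x) x.
Proof. by move=> e e_gt0; exists 0%N => n _; rewrite /R_dist Rminus_diag Rabs_R0. Qed.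

Lemma Un_cv_big_sum (I : Type) (r : seq I) (u : nat -> I -> R) (l : I -> R) :
  (forall i, Un_cv (u^~ i) (l i)) ->
  Un_cv (fun n => \big[Rplus/0]_(i <- r) u n i) (\big[Rplus/0]_(i <- r) l i).
Proof.
move=> u_cv; elim: r => [|i r IH].
  by rewrite big_nil; apply: Un_cv_ext (Un_cv_const 0) => n; rewrite big_nil.
rewrite big_cons; apply: Un_cv_ext (CV_plus _ _ _ _ (u_cv i) IH) => n.
by rewrite big_cons.
Qed.

Lemma Un_cv_succ (u : nat -> R) l : Un_cv (fun n => u n.+1) l <-> Un_cv u l.
Proof.
split=> [u_cv | /(CV_shift' _ 1) u_cv].
  by apply: (CV_shift _ 1); apply: Un_cv_ext u_cv => n; rewrite Nat.add_1_r.
by apply: Un_cv_ext u_cv => n; rewrite Nat.add_1_r.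
Qed.

Section LocalFactorization.
Variables (V : finType) (par : V -> V -> bool) (rank : V -> nat).
Hypothesis rank_par : forall x y, par y x -> (rank y < rank x)%N.
Variable f : V -> world V -> R.
Hypothesis f_local : forall x (W W' : world V),
  (forall y, par y x -> W y = W' y) -> f x W = f x W'.

Definition factor x (W : world V) : R := if W x then f x W else 1 - f x W.

Definition null_off (S : {set V}) (W : world V) := [forall y, (y \notin S) ==> ~~ W y].

Definition toggle x (W : world V) : world V :=
  [ffun y => if y == x then ~~ W y else W y].

Lemma toggleK x : involutive (toggle x).
Proof. by move=> W; apply/ffunP=> y; rewrite !ffunE; case: eqP => // _; exact: negbK. Qed.

Lemma null_offD1 (S : {set V}) x W :
  x \in S -> null_off (S :\ x) W = null_off S W && ~~ W x.
Proof.
move=> Sx; apply/forallP/andP => [W0 | [/forallP W0 Wx] y].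
- split; last by move/implyP: (W0 x); apply; rewrite in_setD1 eqxx.
  apply/forallP=> y; apply/implyP=> Sy; move/implyP: (W0 y); apply.
  by rewrite in_setD1 (negbTE Sy) andbF.
- apply/implyP; rewrite in_setD1 negb_and negbK => /orP[/eqP-> // | Sy].
  by move/implyP: (W0 y); apply.
Qed.

Lemma null_off_toggle (S : {set V}) x W :
  x \in S -> null_off S (toggle x W) = null_off S W.
Proof.
move=> Sx; congr (_ : bool); apply: eq_forallb => y; rewrite ffunE.
by case: eqP => // ->; rewrite Sx.
Qed.

(* A nonempty parent-closed S has a node x of maximal rank, which is the parent
   of no node of S; summing out the value of x first contributes f + (1 - f). *)
Lemma sum_prod_factor_closed n (S : {set V}) :
  (forall x y, x \in S -> par y x -> y \in S) -> #|S| = n ->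
  \big[Rplus/0]_(W | null_off S W) \big[Rmult/1]_(x in S) factor x W = 1.
Proof.
elim: n S => [|n IH] S S_closed cardS.
  have -> : S = set0 by apply/eqP; rewrite -cards_eq0 cardS.
  rewrite (big_pred1 [ffun => false]) ?big_set0 // => W.
  apply/forallP/eqP => [W0 | -> y]; last by rewrite ffunE implybT.
  by apply/ffunP=> y; rewrite ffunE; move/implyP: (W0 y); rewrite inE => /(_ isT)/negbTE.
have [x0 Sx0] : {x0 | x0 \in S} by apply/sigW/card_gt0P; rewrite cardS.
have [x Sx x_max] := arg_maxnP rank Sx0; have {}Sx : x \in S := Sx.
have x_sink z : z \in S -> ~~ par x z.
  by move=> Sz; apply/negP => /rank_par; apply/negP; rewrite -leqNgt; exact: x_max.
have Sx_closed z y : z \in S :\ x -> par y z -> y \in S :\ x.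
  rewrite !in_setD1 => /andP[_ Sz] pyz; rewrite (S_closed _ _ Sz pyz) andbT.
  by apply: contraTneq pyz => ->; exact: x_sink.
have cardSx : #|S :\ x| = n by move: (cardsD1 x S); rewrite cardS Sx add1n => -[].
have f_toggle z W : z \in S -> f z (toggle x W) = f z W.
  move=> Sz; apply: f_local => y pyz; rewrite ffunE; case: eqP => // eyx.
  by move: (x_sink _ Sz); rewrite -eyx pyz.
have on_x W : null_off S (toggle x W) && toggle x W x = null_off (S :\ x) W.
  by rewrite null_off_toggle // null_offD1 // ffunE eqxx.
have off_x W : null_off S W && ~~ W x = null_off (S :\ x) W by rewrite null_offD1.
have toggled W : \big[Rmult/1]_(z in S | z != x) factor z (toggle x W) =
                 \big[Rmult/1]_(z in S | z != x) factor z W.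
  by apply: eq_bigr => z /andP[Sz zx]; rewrite /factor f_toggle // ffunE (negbTE zx).
have others W : \big[Rmult/1]_(z in S | z != x) factor z W =
                \big[Rmult/1]_(z in S :\ x) factor z W.
  by apply: eq_bigl => z; rewrite in_setD1 andbC.
apply: etrans (IH _ Sx_closed cardSx); rewrite (bigID (fun W : world V => W x)) /=.
rewrite (reindex_inj (can_inj (toggleK x))) /= (eq_bigl _ _ on_x) (eq_bigl _ _ off_x).
rewrite -big_split /=; apply: eq_bigr => W; rewrite null_offD1 // => /andP[_ /negbTE Wx].
rewrite !(bigD1 x Sx) /= toggled !others.
by rewrite /factor ffunE eqxx Wx /= f_toggle //; lra.
Qed.

Lemma sum_prod_factor : \big[Rplus/0]_(W : world V) \big[Rmult/1]_x factor x W = 1.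
Proof.
apply: etrans (@sum_prod_factor_closed #|[set: V]| [set: V] _ erefl) => //.
apply: eq_big => [W | W _]; last by apply: eq_bigl => x; rewrite in_setT.
by apply/esym/forallP => y; rewrite in_setT.
Qed.

End LocalFactorization.

Lemma bn_joint_sum1 (V : finType) (B : BN V) :
  \big[Rplus/0]_(W : world V) bn_joint B W = 1.
Proof.
by have [rk rkP] := bn_dag B; exact: (sum_prod_factor rkP (@bn_cpt_local V B)).
Qed.

Lemma trans_sum1 (V : finType) (T : TBN V) W :
  \big[Rplus/0]_(W' : world V) trans T W W' = 1.
Proof.
have [rk rkP] := tbn_dag T.
apply: (sum_prod_factor rkP (f := fun x W' => tbn_cpt T x W W')) => x W1 W2 W12.
exact: tbn_cpt_local.
Qed.

Lemma trans_ge0 (V : finType) (T : TBN V) W W' : 0 <= trans T W W'.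
Proof.
rewrite /trans; elim/big_rec: _ => [|x p _ p_ge0]; first lra.
by apply: Rmult_le_pos => //; have := tbn_cpt_range T x W W'; case: (W' x); lra.
Qed.

Section StochasticKernel.
Variables (I : finType) (M : I -> I -> R).
Hypothesis M_ge0 : forall i j, 0 <= M i j.
Hypothesis M_sum1 : forall i, \big[Rplus/0]_j M i j = 1.

Definition invariant (p : I -> R) := forall j, \big[Rplus/0]_i (p i * M i j) = p j.

Local Notation n := #|I|.

(* [M - 1] kills the constant vector, so some nonzero row vector is killed by it too. *)
Lemma invariant_nonzero_exists (i0 : I) : exists2 v, invariant v & exists i, v i <> 0.
Proof.
pose A : 'M[R]_n := (\matrix_(i, j) (M (enum_val i) (enum_val j) - (i == j)%:R))%R.
have sum_enum (F : I -> R) : (\sum_(j < n) F (enum_val j))%R = \big[Rplus/0]_i F i.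
  rewrite (reindex (@enum_rank I)) /=; last exact/onW_bij/enum_rank_bij.
  by apply: eq_bigr => i _; rewrite enum_rankK.
have sum_delta (i : 'I_n) (x : 'I_n -> R) : (\sum_(j < n) x j * (j == i)%:R)%R = x i.
  rewrite (bigD1 i) //= eqxx GRing.mulr1 big1 ?GRing.addr0 // => j /negbTE ->.
  exact: GRing.mulr0.
have A1 : (A *m const_mx 1 = 0 :> 'cV[R]_n)%R.
  apply/matrixP => i k; rewrite !mxE.
  under eq_bigr do rewrite !mxE GRing.mulr1.
  rewrite GRing.sumrB (sum_enum (M (enum_val i))) M_sum1.
  have := sum_delta i (fun=> 1%R); under eq_bigr do rewrite GRing.mul1r.
  by under eq_bigr do rewrite eq_sym; move=> ->; exact: GRing.subrr.
have one_neq0 : ((const_mx 1 : 'cV[R]_n)^T != 0)%R.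
  apply/eqP => /matrixP /(_ ord0 (enum_rank i0)); rewrite !mxE; exact: R1_neq_R0.
have /det0P[u u_neq0 uA] : (\det A == 0)%R.
  by rewrite -det_tr; apply/det0P; exists (const_mx 1)^T%R; rewrite // -trmx_mul A1 trmx0.
exists (fun i => u ord0 (enum_rank i)).
  move=> j; move/matrixP: uA => /(_ ord0 (enum_rank j)); rewrite !mxE /=.
  under eq_bigr do rewrite mxE enum_rankK GRing.mulrBr.
  rewrite GRing.sumrB sum_delta => /GRing.subr0_eq <-.
  by rewrite -sum_enum; apply: eq_bigr => i _; rewrite enum_valK.
have [i ui | u0] := pickP (fun i => u ord0 i != 0%R).
  by exists (enum_val i); rewrite enum_valK; apply/eqP.
case/eqP: u_neq0; apply/matrixP => a b; rewrite (ord1 a) mxE.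
by move: (u0 b) => /negbFE/eqP.
Qed.

(* |v| is sub-invariant by the triangle inequality, and [M] preserves total mass. *)
Lemma invariant_Rabs v : invariant v -> invariant (fun i => Rabs (v i)).
Proof.
move=> v_inv.
have sub j : Rabs (v j) <= \big[Rplus/0]_i (Rabs (v i) * M i j).
  rewrite -{1}(v_inv j); apply: (Rle_trans _ (\big[Rplus/0]_i Rabs (v i * M i j))).
    exact/RleP/(@Num.Theory.ler_norm_sum R R).
  apply: sumR_le => i; rewrite Rabs_mult (Rabs_right (M i j)).
    exact: Rle_refl.
  exact: Rle_ge.
have gap0 : \big[Rplus/0]_j (\big[Rplus/0]_i (Rabs (v i) * M i j) - Rabs (v j)) = 0.
  rewrite sumRB exchange_big /=.
  under eq_bigr do rewrite -big_distrr /= M_sum1 Rmult_1_r.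
  exact: Rminus_diag_eq.
have gap_ge0 j : 0 <= \big[Rplus/0]_i (Rabs (v i) * M i j) - Rabs (v j).
  by have := sub j; lra.
by move=> j; have := sumR_eq0P gap_ge0 gap0 j; lra.
Qed.

Lemma stationary_law_exists (i0 : I) :
  exists p, [/\ forall i, 0 <= p i, \big[Rplus/0]_i p i = 1 & invariant p].
Proof.
have [v /invariant_Rabs v_inv [k vk]] := invariant_nonzero_exists i0.
set p := fun i => Rabs (v i) in v_inv.
have p_ge0 j : 0 <= p j by exact: Rabs_pos.
have mass_gt0 : 0 < \big[Rplus/0]_j p j.
  have [|mass_le0] := Rlt_le_dec 0 (\big[Rplus/0]_j p j) => //.
  have mass0 : \big[Rplus/0]_j p j = 0 by have := sumR_ge0 p_ge0; lra.
  by case: (Rabs_no_R0 _ vk); exact: sumR_eq0P p_ge0 mass0 k.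
exists (fun i => p i / \big[Rplus/0]_j p j); split.
- by move=> j; apply: Rmult_le_pos; [exact: p_ge0 | apply/Rlt_le/Rinv_0_lt_compat].
- by rewrite -big_distrl /=; apply: Rinv_r; lra.
- move=> j; rewrite /Rdiv -(v_inv j) big_distrl /=.
  by apply: eq_bigr => i _; ring.
Qed.

End StochasticKernel.

Section ClosedClass.
Variables (V : finType) (T : TBN V) (S : pred (world V)) (w0 : world V).
Hypothesis S_w0 : S w0.
Hypothesis S_closed : forall w w', S w -> 0 < trans T w w' -> S w'.

(* Redirecting the rows outside [S] to [w0] yields a stochastic kernel from which
   no mass can leave [S]; its stationary laws are thus stationary laws of [T]. *)
Definition confined_trans (w w' : world V) : R :=
  if S w then trans T w w' else if w' == w0 then 1 else 0.

Lemma confined_trans_out w w' : ~~ S w' -> confined_trans w w' = 0.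
Proof.
move=> S'w'; rewrite /confined_trans; case: ifP => [Sw | _].
  have [t_pos | //] := Rle_lt_or_eq_dec _ _ (trans_ge0 T w w').
  by rewrite (S_closed Sw t_pos) in S'w'.
by case: eqP => // ew'; rewrite ew' S_w0 in S'w'.
Qed.

Lemma stationary_supported_in_closed :
  exists P, stationary T P /\ forall w, ~~ S w -> P w = 0.
Proof.
have [|w|P [P_ge0 P_sum1 P_inv]] := @stationary_law_exists _ confined_trans _ _ w0.
- move=> w w'; rewrite /confined_trans; case: (S w); first exact: trans_ge0.
  by case: (w' == w0); lra.
- rewrite /confined_trans; case: (S w); first exact: trans_sum1.
  by rewrite (bigD1 w0) //= eqxx big1 => [|w' /negbTE ->]; lra.
have P_out w : ~~ S w -> P w = 0.
  move=> S'w; rewrite -P_inv; apply: big1 => w' _.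
  by rewrite confined_trans_out // Rmult_0_r.
exists P; split=> //; split=> //; split=> // U.
rewrite -[RHS]P_inv; apply: eq_bigr => W _.
rewrite /confined_trans Rmult_comm; case: ifP => // S'W.
by rewrite P_out ?S'W // !Rmult_0_l.
Qed.

End ClosedClass.

Section ChainWeight.
Variables (V : finType) (T : TBN V) (a : world V -> R).

Fixpoint chain_weight n (w : world V) : R :=
  if n is n'.+1 then \big[Rplus/0]_w' (trans T w w' * a w' * chain_weight n' w')
  else 1.

Lemma chain_weightE n w :
  \big[Rplus/0]_(ws : n.-tuple (world V))
     (\big[Rmult/1]_(v <- ws) a v * chain_prob T w ws) = chain_weight n w.
Proof.
elim: n w => [|n IH] w; first by rewrite big_tuple0 /= big_nil Rmult_1_l.
rewrite big_tupleS /=; apply: eq_bigr => v _.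
rewrite -IH big_distrr /=; apply: eq_bigr => ws _; rewrite big_cons /=.
by set B := bigop _ _ _; set C := chain_prob _ _ _; ring.
Qed.

Hypothesis a_range : forall w, 0 <= a w <= 1.

Lemma chain_weight_ge0 n w : 0 <= chain_weight n w.
Proof.
elim: n w => [|n IH] w /=; first lra.
apply: sumR_ge0 => w'; apply: Rmult_le_pos => //.
by apply: Rmult_le_pos; [exact: trans_ge0 | case: (a_range w')].
Qed.

Lemma chain_weight_decr n w : chain_weight n.+1 w <= chain_weight n w.
Proof.
elim: n w => [|n IH] w /=.
  rewrite -[X in _ <= X](trans_sum1 T w); apply: sumR_le => w'.
  by have := trans_ge0 T w w'; have := a_range w'; nra.
apply: sumR_le => w'; apply: Rmult_le_compat_l; last exact: IH.
by apply: Rmult_le_pos; [exact: trans_ge0 | case: (a_range w')].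
Qed.

Lemma chain_weight_limit :
  exists h : world V -> R,
    [/\ forall w, Un_cv (chain_weight ^~ w) (h w), forall w, 0 <= h w &
        forall w, h w = \big[Rplus/0]_w' (trans T w w' * a w' * h w')].
Proof.
have cv w : {l | Un_cv (chain_weight ^~ w) l}.
  apply: decreasing_cv => [n | ]; first exact: chain_weight_decr.
  by exists 0 => x [n ->]; rewrite /opp_seq; have := chain_weight_ge0 n w; lra.
exists (fun w => sval (cv w)); split=> [w | w | w]; first exact: svalP.
  exact: Rle_cv_lim (fun n => chain_weight_ge0 n w) (Un_cv_const 0) (svalP (cv w)).
apply: (UL_sequence (fun n => chain_weight n.+1 w)).
  exact: (proj2 (Un_cv_succ _ _) (svalP (cv w))).
by apply: Un_cv_big_sum => w'; exact: CV_mult (Un_cv_const _) (svalP (cv w')).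
Qed.

End ChainWeight.

Lemma chain_weight1 (V : finType) (T : TBN V) n w : chain_weight T (fun=> 1) n w = 1.
Proof.
elim: n w => [|n IH] w //=; rewrite -[RHS](trans_sum1 T w).
by apply: eq_bigr => w' _; rewrite IH !Rmult_1_r.
Qed.

Lemma unravel_weightE (V : finType) (D : DBN V) (a : world V -> R) n :
  \big[Rplus/0]_(ws : n.+1.-tuple (world V))
     (\big[Rmult/1]_(v <- ws) a v * unravel_joint D ws) =
  \big[Rplus/0]_w (a w * bn_joint D.1 w * chain_weight D.2 a n w).
Proof.
rewrite big_tupleS; apply: eq_bigr => w _.
rewrite -chain_weightE big_distrr /=; apply: eq_bigr => ws _; rewrite big_cons /=.
by set B := bigop _ _ _; set C := chain_prob _ _ _; ring.
Qed.

Section MaximumPrinciple.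
Variables (V : finType) (T : TBN V) (a h : world V -> R).
Hypothesis a_range : forall w, 0 <= a w <= 1.
Hypothesis h_ge0 : forall w, 0 <= h w.
Hypothesis h_fix : forall w, h w = \big[Rplus/0]_w' (trans T w w' * a w' * h w').

(* [h w] is an average of the values [a w' * h w' <= h w]: none can fall short. *)
Lemma fixpoint_max_spread w :
  (forall w', h w' <= h w) -> forall w', 0 < trans T w w' -> a w' * h w' = h w.
Proof.
move=> h_max w' t_pos.
have gap_ge0 y : 0 <= trans T w y * (h w - a y * h y).
  apply: Rmult_le_pos; first exact: trans_ge0.
  by have := h_max y; have := h_ge0 y; have := a_range y; nra.
have gap0 : \big[Rplus/0]_y (trans T w y * (h w - a y * h y)) = 0.
  rewrite (eq_bigr (fun y => h w * trans T w y - trans T w y * a y * h y)) => [|y _].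
    by rewrite sumRB -big_distrr /= trans_sum1 -h_fix; ring.
  ring.
by have /Rmult_integral[|] := sumR_eq0P gap_ge0 gap0 w'; lra.
Qed.

End MaximumPrinciple.

Section Avoidance.
Variables (V : finType) (phi : pform V).

Definition outside (w : world V) : R := if psat w phi then 0 else 1.

Lemma outside_range w : 0 <= outside w <= 1.
Proof. by rewrite /outside; case: psat; lra. Qed.

Lemma prod_outside (s : seq (world V)) :
  \big[Rmult/1]_(v <- s) outside v = if has (fun v => psat v phi) s then 0 else 1.
Proof.
elim: s => [|w s IH]; first by rewrite big_nil.
by rewrite big_cons IH /outside /=; case: psat; case: has => /=; lra.
Qed.

Lemma avoidance_fixpoint_eq0 (T : TBN V) (h : world V -> R) :
  (forall w, 0 <= h w) ->
  (forall w, h w = \big[Rplus/0]_w' (trans T w w' * outside w' * h w')) ->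
  (exists d, is_delta T phi d /\ 0 < d) -> forall w, h w = 0.
Proof.
move=> h_ge0 h_fix [d [[_ d_min] d_pos]].
have [w0 _ w0_max] := @Order.TotalTheory.arg_maxP _ R _ [ffun=> false] xpredT h isT.
suff m_le0 : h w0 <= 0.
  by move=> w; have := h_ge0 w; have /RleP := w0_max w isT; lra.
apply: Rnot_lt_le => m_pos.
pose S w := (h w == h w0) && ~~ psat w phi.
have S_succ w w' : h w = h w0 -> 0 < trans T w w' -> S w'.
  move=> hw t_pos; have max_w w'' : h w'' <= h w by rewrite hw; apply/RleP/w0_max.
  have := fixpoint_max_spread outside_range h_ge0 h_fix max_w t_pos.
  rewrite /S /outside hw; case: (psat w' phi) => /= spread; first by exfalso; lra.
  by rewrite andbT; apply/eqP; lra.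
have [w1 t_pos] : exists w1, 0 < trans T w0 w1.
  apply: NNPP => no_succ; have := trans_sum1 T w0; rewrite big1 => [|w1 _]; first lra.
  have [t_pos | //] := Rle_lt_or_eq_dec _ _ (trans_ge0 T w0 w1).
  by case: no_succ; exists w1.
have [P [P_stat P_out]] := stationary_supported_in_closed (S_succ _ _ erefl t_pos)
  (fun w w' Sw => S_succ w w' (eqP (proj1 (andP Sw)))).
have := d_min P P_stat; rewrite /mass big1 => [|w phi_w]; first lra.
by apply: P_out; rewrite /S phi_w andbF.
Qed.

End Avoidance.

Section Observation.
Variables (L : OntologyLanguage) (V : finType) (K : DBL_KB L V).
Variables (c : ol_cons L) (phi : pform V).
Hypothesis phi_ctx : context_formula K.2 c phi.

Lemma ind_observed t (ws : t.-tuple (world V)) :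
  Defs.ind (exists i : 'I_t, entails (restrict K.2 (tnth ws i)) c) =
  1 - \big[Rmult/1]_(v <- ws) outside phi v.
Proof.
rewrite prod_outside /Defs.ind.
case: excluded_middle_informative => /= [[i /phi_ctx phi_i] | unseen].
  case: hasP => [_ | []]; first lra.
  by exists (tnth ws i); first exact: mem_tnth.
case: hasP => [[v /tnthP[i ->] /phi_ctx obs] | _]; last lra.
by case: unseen; exists i.
Qed.

Lemma prob_within_succ n :
  prob_within K c n.+1 =
  1 - \big[Rplus/0]_w (outside phi w * bn_joint K.1.1 w *
                        chain_weight K.1.2 (outside phi) n w).
Proof.
rewrite /prob_within (eq_bigr (fun ws : n.+1.-tuple (world V) =>
   \big[Rmult/1]_(v <- ws) 1 * unravel_joint K.1 ws -
   \big[Rmult/1]_(v <- ws) outside phi v * unravel_joint K.1 ws)) => [|ws _].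
  rewrite sumRB !unravel_weightE; congr (_ - _).
  rewrite -[RHS](bn_joint_sum1 K.1.1); apply: eq_bigr => w _.
  by rewrite chain_weight1; ring.
by rewrite ind_observed big1_eq Rmult_minus_distr_r.
Qed.

End Observation.

Theorem mainTheorem3 (L : OntologyLanguage) (V : finType) (K : DBL_KB L V)
  (HO : is_vontology K.2) (c : ol_cons L) (phi : pform V)
  (Hphi : context_formula K.2 c phi)
  (Hdelta : exists d : R, is_delta K.1.2 phi d /\ 0 < d) :
  prob_eventually_is K c 1.
Proof.
have [h [h_lim h_ge0 h_fix]] := chain_weight_limit K.1.2 (outside_range phi).
have h0 := avoidance_fixpoint_eq0 h_ge0 h_fix Hdelta.
apply/Un_cv_succ; apply: (Un_cv_ext _ _ (fun n => esym (prob_within_succ Hphi n))).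
have := Un_cv_big_sum (index_enum (world V))
  (fun w => CV_mult _ _ _ _ (Un_cv_const (outside phi w * bn_joint K.1.1 w)) (h_lim w)).
rewrite [X in Un_cv _ X]big1 => [u_cv | w _]; last by rewrite h0 Rmult_0_r.
by have := CV_minus _ _ _ _ (Un_cv_const 1) u_cv; rewrite Rminus_0_r.
Qed.
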